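(* On the set of persistence diagrams all of whose points have strictly positive coordinates, let $A\sim A'$ iff $A=cA'$ for some $c>0$. Then $D_S([A],[B]):=\overline{d_S}(\log A,\log B)$ is well defined on equivalence classes (independent of representatives) and is a metric on the set of equivalence classes.
   Context: A persistence diagram here is a finite multiset of points $(a_x,a_y)$ with $0<a_x<a_y<\infty$, together with the diagonal $\Delta$ of infinite multiplicity. $cA=\{(ca_x,ca_y)\}$ for $c>0$. $\log A=\{(\log a_x,\log a_y): a\in A\}$ (a finite multiset of points above the diagonal, plus the diagonal). For such multisets and $s\in\mathbb{R}$, $A+s=\{(a_x+s,a_y+s)\}$. The bottleneck distance $d_\infty(A,B)$ is the infimum over multi-bijections between $A\cup\Delta$ and $B\cup\Delta$ of the maximal $\ell^\infty$ matching distance. The shift-invariant bottleneck distance is $\overline{d_S}(A,B)=\inf_{s\in\mathbb{R}}d_\infty(A+s,B)$. *)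

From mathcomp Require Import all_boot all_order all_algebra.
From mathcomp Require Import all_classical all_reals all_analysis.
Set Implicit Arguments. Unset Strict Implicit. Unset Printing Implicit Defensive.
Import Order.TTheory GRing.Theory Num.Theory.
Local Open Scope ring_scope.

Section PD.
Variable R : realType.

(* A finite multiset of points of R^2, represented by a list (order irrelevant). *)
Definition pts := seq (R * R).

Definition is_pdiag (A : pts) : Prop := forall p, p \in A -> 0 < p.1 /\ p.1 < p.2.

Definition pd_scale (c : R) (A : pts) : pts := map (fun p => (c * p.1, c * p.2)) A.
Definition pd_shift (A : pts) (s : R) : pts := map (fun p => (p.1 + s, p.2 + s)) A.
Definition pd_log (A : pts) : pts := map (fun p => (ln p.1, ln p.2)) A.

Definition linf (p q : R * R) : R := Num.max `|p.1 - q.1| `|p.2 - q.2|.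

(* A multi-bijection between A u Delta and B u Delta is encoded by:
   - a partial injection f from (indices of) A to (indices of) B,
   - for each point of A not matched into B, the diagonal point (tA i, tA i)
     it is matched to,
   - for each point of B not hit by f, the diagonal point (tB k, tB k)
     it is matched to;
   the remaining diagonal points are matched to themselves (cost 0). *)
Definition partial_inj m n (f : 'I_m -> option 'I_n) : Prop :=
  forall i j k, f i = Some k -> f j = Some k -> i = j.

Definition matching_cost (A B : pts) (f : 'I_(size A) -> option 'I_(size B))
    (tA : 'I_(size A) -> R) (tB : 'I_(size B) -> R) : R :=
  Num.max
    (\big[Num.max/0]_(i < size A)
        match f i with
        | Some k => linf (nth (0,0) A i) (nth (0,0) B k)
        | None => linf (nth (0,0) A i) (tA i, tA i)
        end)
    (\big[Num.max/0]_(k < size B | [forall i, f i != Some k])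
        linf (nth (0,0) B k) (tB k, tB k)).

Definition bottleneck (A B : pts) : R :=
  inf [set c : R | exists (f : 'I_(size A) -> option 'I_(size B))
                          (tA : 'I_(size A) -> R) (tB : 'I_(size B) -> R),
                     partial_inj f /\ c = matching_cost f tA tB].

Definition dS_bar (A B : pts) : R :=
  inf [set d : R | exists s : R, d = bottleneck (pd_shift A s) B].

Definition pd_equiv (A A' : pts) : Prop :=
  exists c : R, 0 < c /\ perm_eq A (pd_scale c A').

Definition D_S (A B : pts) : R := dS_bar (pd_log A) (pd_log B).

End PD.

From mathcomp Require Import all_boot all_order all_algebra.
From mathcomp Require Import all_classical all_reals all_analysis.
From mathcomp Require Import lra.
Set Implicit Arguments. Unset Strict Implicit. Unset Printing Implicit Defensive.
Import Order.TTheory GRing.Theory Num.Theory.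
Local Open Scope ring_scope.

(* Since ln (c * x) = ln c + ln x, the logarithm turns the rescaling A ~ cA
   of a diagram into the translation log A + ln c, so the theorem says that
   the shift-invariant bottleneck distance dS_bar is a pseudometric
   invariant under translations and vanishing exactly on translates.

   A matching cheaper
      than half the smallest persistence is a bijection, and one cheaper than
      the separation scale of the finitely many coordinate differences
      between points of a and b moves every point by the same amount.
   5. The main theorem transports 1-4 through ln and expR. *)

Section PersistenceDiagrams.
Variable R : realType.
Implicit Types (A B C a b : pts R) (p q : R * R).

Local Notation index_map A B := ('I_(size A) -> option 'I_(size B)).
Local Notation diag_map A := ('I_(size A) -> R).

Lemma linf_id p : linf p p = 0.
Proof. by rewrite /linf !subrr normr0 maxxx. Qed.

Lemma linfC p q : linf p q = linf q p.
Proof. by rewrite /linf distrC [`|p.2 - _|]distrC. Qed.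

Lemma linf_tri p q (r : R * R) : linf p r <= linf p q + linf q r.
Proof.
rewrite /linf ge_max; apply/andP; split.
  by apply: le_trans (ler_distD q.1 _ _) _; apply: lerD; rewrite le_max lexx.
by apply: le_trans (ler_distD q.2 _ _) _; apply: lerD; rewrite le_max lexx ?orbT.
Qed.

Lemma linf_diag p t : (p.2 - p.1) / 2 <= linf p (t, t).
Proof.
rewrite /linf /=.
have le1 : `|p.1 - t| <= Num.max `|p.1 - t| `|p.2 - t| by rewrite le_max lexx.
have le2 : `|p.2 - t| <= Num.max `|p.1 - t| `|p.2 - t| by rewrite le_max lexx orbT.
have pers : p.2 - p.1 <= `|p.1 - t| + `|p.2 - t|.
  apply: le_trans (ler_norm _) _; apply: le_trans (ler_distD t _ _) _.
  by rewrite addrC [`|t - _|]distrC.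
rewrite ler_pdivrMr //; apply: le_trans pers _; rewrite mulr2n mulrDr mulr1.
exact: lerD le1 le2.
Qed.

Lemma cost_ge0 A B (f : index_map A B) (tA : diag_map A) (tB : diag_map B) :
  0 <= @matching_cost R A B f tA tB.
Proof. by rewrite /matching_cost le_max bigmax_ge_id. Qed.

Lemma cost_some A B (f : index_map A B) (tA : diag_map A) (tB : diag_map B)
    i k : f i = Some k ->
  linf (nth (0,0) A i) (nth (0,0) B k) <= @matching_cost R A B f tA tB.
Proof.
move=> Ei; rewrite /matching_cost le_max; apply/orP; left.
by apply: le_trans (le_bigmax _ _ i); rewrite Ei.
Qed.

Lemma cost_none A B (f : index_map A B) (tA : diag_map A) (tB : diag_map B)
    i : f i = None ->
  linf (nth (0,0) A i) (tA i, tA i) <= @matching_cost R A B f tA tB.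
Proof.
move=> Ei; rewrite /matching_cost le_max; apply/orP; left.
by apply: le_trans (le_bigmax _ _ i); rewrite Ei.
Qed.

Lemma cost_unmatched A B (f : index_map A B) (tA : diag_map A) (tB : diag_map B)
    k : (forall i, f i != Some k) ->
  linf (nth (0,0) B k) (tB k, tB k) <= @matching_cost R A B f tA tB.
Proof.
move=> Hk; rewrite /matching_cost le_max; apply/orP; right.
by apply: le_bigmax_cond; apply/forallP.
Qed.

Lemma cost_le A B (f : index_map A B) (tA : diag_map A) (tB : diag_map B)
    c : 0 <= c ->
  (forall i k, f i = Some k -> linf (nth (0,0) A i) (nth (0,0) B k) <= c) ->
  (forall i, f i = None -> linf (nth (0,0) A i) (tA i, tA i) <= c) ->
  (forall k, (forall i, f i != Some k) -> linf (nth (0,0) B k) (tB k, tB k) <= c) ->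
  @matching_cost R A B f tA tB <= c.
Proof.
move=> c0 Hsome Hnone Hun; rewrite /matching_cost ge_max; apply/andP; split.
  by apply: bigmax_le => // i _; case Ei: (f i); [exact: Hsome | exact: Hnone].
by apply: bigmax_le => // k /forallP; exact: Hun.
Qed.

Definition costs A B : set R :=
  [set c | exists (f : index_map A B) (tA : diag_map A) (tB : diag_map B),
             partial_inj f /\ c = matching_cost f tA tB].

Lemma has_inf_costs A B : has_inf (costs A B).
Proof.
split; last by exists 0 => c [f [tA [tB [_ ->]]]]; exact: cost_ge0.
exists (matching_cost (fun _ : 'I_(size A) => @None 'I_(size B))
                      (fun _ => 0) (fun _ => 0)).
by exists (fun _ => None), (fun _ => 0), (fun _ => 0).
Qed.

Lemma bn_le A B (f : index_map A B) (tA : diag_map A) (tB : diag_map B) :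
  partial_inj f ->
  bottleneck A B <= @matching_cost R A B f tA tB.
Proof.
by move=> pf; apply: ge_inf; [case: (has_inf_costs A B) | exists f, tA, tB].
Qed.

Lemma bn_ge A B x :
  (forall f tA tB, partial_inj f -> x <= @matching_cost R A B f tA tB) ->
  x <= bottleneck A B.
Proof.
move=> H; apply: lb_le_inf; first by case: (has_inf_costs A B).
by move=> c [f [tA [tB [pf ->]]]]; exact: H.
Qed.

Lemma bn_ge0 A B : 0 <= bottleneck A B.
Proof. by apply: bn_ge => *; exact: cost_ge0. Qed.

Lemma bn_lt A B x : bottleneck A B < x ->
  exists f tA tB, partial_inj f /\ @matching_cost R A B f tA tB < x.
Proof.
rewrite -subr_gt0 => gap.
have [c [f [tA [tB [pf ->]]]] Hc] := inf_adherent gap (has_inf_costs A B).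
by exists f, tA, tB; split; rewrite // addrC subrK in Hc.
Qed.

Lemma bn_map A B (g : R * R -> R * R) (phi : R -> R) :
  (forall p q, linf (g p) (g q) <= linf p q) ->
  (forall p t, linf (g p) (phi t, phi t) <= linf p (t, t)) ->
  bottleneck (map g A) (map g B) <= bottleneck A B.
Proof.
move=> Hg Hdiag; apply: bn_ge => f tA tB pf.
have eA : size (map g A) = size A by rewrite size_map.
have eB : size (map g B) = size B by rewrite size_map.
have nthA (i : 'I_(size (map g A))) : nth (0,0) (map g A) i = g (nth (0,0) A i).
  by rewrite (nth_map (0,0)) // -eA.
have nthB (k : 'I_(size (map g B))) : nth (0,0) (map g B) k = g (nth (0,0) B k).
  by rewrite (nth_map (0,0)) // -eB.
pose f' i := omap (cast_ord (esym eB)) (f (cast_ord eA i)).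
have pf' : partial_inj f'.
  move=> i j k; rewrite /f'.
  case Ei: (f _) => [a|] //= [Ea]; case Ej: (f _) => [b|] //= [Eb].
  have ab : a = b by rewrite -(cast_ordK (esym eB) a) Ea -Eb cast_ordK.
  subst b; move: (pf _ _ _ Ei Ej) => /(congr1 (cast_ord (esym eA))).
  by rewrite !cast_ordK.
apply: le_trans (bn_le (f := f') (fun i => phi (tA (cast_ord eA i)))
                       (fun k => phi (tB (cast_ord eB k))) pf') _.
apply: cost_le; first exact: cost_ge0.
- move=> i k; rewrite /f'; case Ei: (f _) => [k'|] //= [<-].
  have edge := cost_some tA tB Ei.
  by rewrite nthA nthB; exact: le_trans (Hg _ _) edge.
- move=> i; rewrite /f'; case Ei: (f _) => [k'|] //= _.
  have edge := cost_none tA tB Ei.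
  by rewrite nthA; exact: le_trans (Hdiag _ _) edge.
- move=> k Hk; rewrite nthB; apply: le_trans (Hdiag _ _) _.
  apply: (cost_unmatched tA tB (k := cast_ord eB k)) => i; apply/eqP => Ei.
  move: (Hk (cast_ord (esym eA) i)).
  by rewrite /f' cast_ordKV Ei /= cast_ordK eqxx.
Qed.

Lemma shift_shift A s t : pd_shift (pd_shift A s) t = pd_shift A (s + t).
Proof. by rewrite /pd_shift -map_comp; apply: eq_map => p /=; rewrite !addrA. Qed.

Lemma shift0 A : pd_shift A 0 = A.
Proof. by rewrite /pd_shift -[RHS]map_id; apply: eq_map => -[x y] /=; rewrite !addr0. Qed.

Lemma shift_diff (x y z : R) : (x + z) - (y + z) = x - y.
Proof. by rewrite [y + z]addrC addrKA. Qed.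

Lemma bn_shift A B t : bottleneck (pd_shift A t) (pd_shift B t) = bottleneck A B.
Proof.
have shift_le A' B' t' : bottleneck (pd_shift A' t') (pd_shift B' t') <= bottleneck A' B'.
  apply: (@bn_map A' B' (fun p => (p.1 + t', p.2 + t')) (fun x => x + t')).
    by move=> p q; rewrite /linf /= !shift_diff.
  by move=> p s; rewrite /linf /= !shift_diff.
apply/eqP; rewrite eq_le shift_le /=.
by have := shift_le (pd_shift A t) (pd_shift B t) (- t); rewrite !shift_shift subrr !shift0.
Qed.

(* Symmetry: the inverse of a partial injection is a matching of B with A. *)
Lemma bn_sym_le A B : bottleneck B A <= bottleneck A B.
Proof.
apply: bn_ge => f tA tB pf.
pose g k := [pick i | f i == Some k].
have gSome k i : g k = Some i -> f i = Some k.
  by rewrite /g; case: pickP => // j /eqP Ej [<-].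
have gNone k : g k = None -> forall i, f i != Some k.
  by rewrite /g; case: pickP => // H _ i; rewrite H.
have fSome i k : f i = Some k -> g k = Some i.
  move=> Ei; rewrite /g; case: pickP => [j /eqP Ej | H]; first by rewrite (pf _ _ _ Ej Ei).
  by move: (H i); rewrite Ei eqxx.
have pg : partial_inj g by move=> k l i /gSome E1 /gSome; rewrite E1 => -[].
apply: le_trans (bn_le tB tA pg) _; apply: cost_le; first exact: cost_ge0.
- by move=> k i /gSome Ei; rewrite linfC; exact: cost_some.
- by move=> k /gNone; exact: cost_unmatched.
- move=> i Hi; apply: cost_none; case Ei: (f i) => [k|] //.
  by move: (Hi k); rewrite (fSome _ _ Ei) eqxx.
Qed.

Lemma bnC A B : bottleneck A B = bottleneck B A.
Proof. by apply/eqP; rewrite eq_le !bn_sym_le. Qed.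

(* Triangle inequality: compose a matching of A, B with one of B, C; a point
   whose partner in B goes to the diagonal follows it there. *)
Lemma cost_compose A B C (f : index_map A B) (tA : diag_map A) (tB : diag_map B)
    (g : index_map B C) (sB : diag_map B) (sC : diag_map C) :
  partial_inj f -> partial_inj g ->
  bottleneck A C <= @matching_cost R A B f tA tB + @matching_cost R B C g sB sC.
Proof.
move=> pf pg.
pose h i := if f i is Some k then g k else None.
pose tA' i := if f i is Some k then sB k else tA i.
pose tC' l := if [pick k | g k == Some l] is Some k then tB k else sC l.
have ph : partial_inj h.
  move=> i j l; rewrite /h.
  case Ei: (f i) => [k|] //; case Ej: (f j) => [k'|] // E1 E2.
  by move: (pg _ _ _ E1 E2) Ej => <- Ej; exact: (pf _ _ _ Ei Ej).
apply: le_trans (bn_le tA' tC' ph) _.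
have c1 := cost_ge0 f tA tB; have c2 := cost_ge0 g sB sC.
apply: cost_le; first exact: addr_ge0.
- move=> i l; rewrite /h; case Ei: (f i) => [k|] // Ek.
  apply: le_trans (linf_tri _ (nth (0,0) B k) _) _.
  by apply: lerD; [exact: cost_some Ei | exact: cost_some Ek].
- move=> i; rewrite /h /tA'; case Ei: (f i) => [k|] Ek.
    apply: le_trans (linf_tri _ (nth (0,0) B k) _) _.
    by apply: lerD; [exact: cost_some Ei | exact: cost_none Ek].
  by rewrite -[linf _ _]addr0; apply: lerD => //; exact: cost_none.
- move=> l Hl; rewrite /tC'; case: pickP => [k /eqP Ek | Hn].
    have Hk i : f i != Some k.
      by apply/eqP => Ei; move: (Hl i); rewrite /h Ei Ek eqxx.
    apply: le_trans (linf_tri _ (nth (0,0) B k) _) _.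
    rewrite addrC; apply: lerD; first exact: cost_unmatched Hk.
    by rewrite linfC; exact: cost_some Ek.
  by rewrite -[linf _ _]add0r; apply: lerD => //; apply: cost_unmatched => k; rewrite Hn.
Qed.

Lemma bn_tri A B C : bottleneck A C <= bottleneck A B + bottleneck B C.
Proof.
rewrite -lerBlDl; apply: bn_ge => f tA tB pf.
rewrite lerBlDl addrC -lerBlDl; apply: bn_ge => g sB sC pg.
by rewrite lerBlDl addrC cost_compose.
Qed.

(* A permutation of the points is a matching of cost 0. *)
Lemma bn_perm A B : perm_eq A B -> bottleneck A B = 0.
Proof.
move=> /(perm_iotaP (0,0)) [Is pI EA].
have uI : uniq Is by rewrite (perm_uniq pI) iota_uniq.
have sI : size Is = size B by rewrite (perm_size pI) size_iota.
have sA : size A = size B by rewrite EA size_map.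
have IsB j : (j < size A)%N -> (nth 0%N Is j < size B)%N.
  move=> hj; have : nth 0%N Is j \in iota 0 (size B).
    by rewrite -(perm_mem pI) mem_nth // sI -sA.
  by rewrite mem_iota.
pose f (i : 'I_(size A)) : option 'I_(size B) := insub (nth 0%N Is i).
have fval (i : 'I_(size A)) : exists2 k, f i = Some k & val k = nth 0%N Is i.
  by rewrite /f; case: insubP => [k _ Ek|]; [exists k | rewrite IsB].
have pf : partial_inj f.
  move=> i j k; have [k1 -> E1] := fval i; have [k2 -> E2] := fval j.
  move=> [e1] [e2]; subst k1 k2; apply/val_inj/eqP => /=.
  by rewrite -(nth_uniq 0%N _ _ uI) ?sI -?sA // -E1 -E2.
apply/eqP; rewrite eq_le bn_ge0 andbT.
apply: le_trans (bn_le (fun _ => 0) (fun _ => 0) pf) _; apply: cost_le => //.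
- move=> i k Ei; have [k' Ei' Ek'] := fval i; move: Ei'; rewrite Ei => -[->].
  by rewrite {1}EA (nth_map 0%N) ?sI -?sA // -Ek' linf_id.
- by move=> i; have [k -> _] := fval i.
- move=> k Hk; have kIs : val k \in Is by rewrite (perm_mem pI) mem_iota /=.
  have jA : (index (val k) Is < size A)%N.
    by move: (val k) kIs => x; rewrite sA -sI index_mem.
  have [k' Ek' Vk'] := fval (Ordinal jA); move: (Hk (Ordinal jA)); rewrite Ek'.
  suff -> : k' = k by rewrite eqxx.
  by apply/val_inj; rewrite Vk' /= nth_index.
Qed.

Lemma cheap_matching_bijective A B (f : index_map A B) (tA : diag_map A) (tB : diag_map B)
    m :
  (forall p, p \in A ++ B -> m <= (p.2 - p.1) / 2) ->
  @matching_cost R A B f tA tB < m ->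
  (forall i, exists k, f i = Some k) /\ (forall k, exists i, f i = Some k).
Proof.
move=> Hm Hc; split.
  move=> i; case Ei: (f i) => [k|]; first by exists k.
  have far := le_trans (linf_diag _ (tA i)) (cost_none tA tB Ei).
  have pers : m <= ((nth (0,0) A i).2 - (nth (0,0) A i).1) / 2.
    by apply: Hm; rewrite mem_cat mem_nth.
  lra.
move=> k; case: (pickP (fun i => f i == Some k)) => [i /eqP Ei|Hk]; first by exists i.
have far := le_trans (linf_diag _ (tB k))
  (cost_unmatched tA tB (fun i => negbT (Hk i))).
have pers : m <= ((nth (0,0) B k).2 - (nth (0,0) B k).1) / 2.
  by apply: Hm; rewrite mem_cat mem_nth ?orbT.
lra.
Qed.

Lemma matching_perm A B (g : R * R -> R * R) (f : index_map A B) :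
  partial_inj f -> (forall i, exists k, f i = Some k) ->
  (forall k, exists i, f i = Some k) ->
  (forall i k, f i = Some k -> nth (0,0) B k = g (nth (0,0) A i)) ->
  perm_eq (map g A) B.
Proof.
move=> pf total onto Hg; apply/(perm_iotaP (0,0)).
exists [seq oapp val 0%N (f i) | i <- enum 'I_(size A)].
  apply: uniq_perm.
  - rewrite map_inj_uniq ?enum_uniq // => i j.
    have [k Ek] := total i; have [l El] := total j; rewrite Ek El /= => /val_inj kl.
    by subst l; exact: (pf _ _ k).
  - exact: iota_uniq.
  move=> x; rewrite mem_iota add0n; apply/mapP/idP.
    by move=> [i _ ->]; have [k ->] := total i; rewrite /= ltn_ord.
  by move=> /andP[_ hx]; have [i Ei] := onto (Ordinal hx); exists i; rewrite ?mem_enum ?Ei.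
rewrite -map_comp -[in LHS](mkseq_nth (0,0) A) /mkseq -val_enum_ord -!map_comp.
apply: eq_map => i /=; have [k Ek] := total i.
by rewrite Ek /= (Hg _ _ Ek).
Qed.

Lemma has_inf_dS a b :
  has_inf [set d : R | exists s : R, d = bottleneck (pd_shift a s) b].
Proof.
split; first by exists (bottleneck (pd_shift a 0) b), 0.
by exists 0 => d [s ->]; exact: bn_ge0.
Qed.

Lemma dS_le a b s : dS_bar a b <= bottleneck (pd_shift a s) b.
Proof. by apply: ge_inf; [case: (has_inf_dS a b) | exists s]. Qed.

Lemma dS_ge a b x : (forall s, x <= bottleneck (pd_shift a s) b) -> x <= dS_bar a b.
Proof.
move=> H; apply: lb_le_inf; first by case: (has_inf_dS a b).
by move=> d [s ->].
Qed.

Lemma dS_ge0 a b : 0 <= dS_bar a b.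
Proof. by apply: dS_ge => s; exact: bn_ge0. Qed.

Lemma dS_lt a b x : dS_bar a b < x -> exists s, bottleneck (pd_shift a s) b < x.
Proof.
rewrite -subr_gt0 => gap.
have [_ [s ->] Hs] := inf_adherent gap (has_inf_dS a b).
by exists s; rewrite addrC subrK in Hs.
Qed.

Lemma dS_shiftl a b t : dS_bar (pd_shift a t) b = dS_bar a b.
Proof.
have shiftl_le a' t' : dS_bar (pd_shift a' t') b <= dS_bar a' b.
  apply: dS_ge => s; apply: le_trans (dS_le _ _ (s - t')) _.
  by rewrite shift_shift addrC subrK.
apply/eqP; rewrite eq_le shiftl_le /=.
by have := shiftl_le (pd_shift a t) (- t); rewrite shift_shift subrr shift0.
Qed.

Lemma dSC a b : dS_bar a b = dS_bar b a.
Proof.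
have sym_le a' b' : dS_bar b' a' <= dS_bar a' b'.
  apply: dS_ge => s; apply: le_trans (dS_le _ _ (- s)) _.
  by rewrite -(bn_shift _ _ s) shift_shift addNr shift0 bnC.
by apply/eqP; rewrite eq_le !sym_le.
Qed.

Lemma dS_tri a b (c : pts R) : dS_bar a c <= dS_bar a b + dS_bar b c.
Proof.
rewrite -lerBlDl; apply: dS_ge => t; rewrite lerBlDl addrC -lerBlDl.
apply: dS_ge => s; rewrite lerBlDl addrC.
apply: le_trans (dS_le _ _ (s + t)) _.
by apply: le_trans (bn_tri _ (pd_shift b t) _) _; rewrite -shift_shift bn_shift.
Qed.

Lemma dS_refl_perm a a' : perm_eq a a' -> dS_bar a a' = 0.
Proof.
move=> pa; apply/eqP; rewrite eq_le dS_ge0 andbT.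
by apply: le_trans (dS_le _ _ 0) _; rewrite shift0 bn_perm.
Qed.

Lemma dS_perm_shiftl a a' b t : perm_eq a (pd_shift a' t) -> dS_bar a b = dS_bar a' b.
Proof.
move=> pa; rewrite -(dS_shiftl a' b t).
have le_perm a1 a2 : perm_eq a1 a2 -> dS_bar a1 b <= dS_bar a2 b.
  move=> p; apply: le_trans (dS_tri _ a2 _) _.
  by rewrite dS_refl_perm // add0r.
by apply/eqP; rewrite eq_le !le_perm // perm_sym.
Qed.

Lemma pos_lower_bound (s : seq R) : (forall x, x \in s -> 0 < x) ->
  exists2 m, 0 < m & forall x, x \in s -> m <= x.
Proof.
elim: s => [|x s IH] H; first by exists 1.
have [m m0 Hm] := IH (fun y ys => H y (@mem_behead _ (x :: s) _ ys)).
exists (Num.min x m); first by rewrite lt_min H ?mem_head.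
move=> y; rewrite inE => /orP[/eqP->|ys]; first by rewrite ge_min lexx.
by rewrite ge_min Hm ?orbT.
Qed.

Lemma finite_separated (s : seq R) : exists2 e, 0 < e &
  forall t x y, x \in s -> y \in s -> `|x - t| < e -> `|y - t| < e -> x = y.
Proof.
pose gaps := [seq `|x - y| | x <- s, y <- [seq y <- s | y != x]].
have [d d0 Hd] : exists2 d, 0 < d & forall x, x \in gaps -> d <= x.
  apply: pos_lower_bound => z /allpairsPdep [x [y [_]]].
  by rewrite mem_filter => /andP[yx _] ->; rewrite normr_gt0 subr_eq0 eq_sym.
exists (d / 2) => [|t x y xs ys hx hy]; first by rewrite divr_gt0.
apply/eqP/negPn/negP => xy.
have gap : d <= `|x - y|.
  apply: Hd; apply/allpairsPdep; exists x, y.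
  by rewrite xs mem_filter eq_sym xy ys.
have := ler_distD t x y; rewrite [`|t - y|]distrC; lra.
Qed.

Lemma nth_shift a s (i : nat) : (i < size a)%N ->
  nth (0,0) (pd_shift a s) i = ((nth (0,0) a i).1 + s, (nth (0,0) a i).2 + s).
Proof. by move=> ia; rewrite (nth_map (0,0)). Qed.

(* The differences of corresponding coordinates of a point of a and a point
   of b: the only possible translation amounts between points of a and b. *)
Definition coord_diffs a b : seq R :=
  [seq q.1 - p.1 | p <- a, q <- b] ++ [seq q.2 - p.2 | p <- a, q <- b].

Lemma uniform_translation a b s e (f : index_map (pd_shift a s) b) :
  partial_inj f -> (forall i, exists k, f i = Some k) ->
  (forall k, exists i, f i = Some k) ->
  (forall x y, x \in coord_diffs a b -> y \in coord_diffs a b ->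
     `|x - s| < e -> `|y - s| < e -> x = y) ->
  (forall i k, f i = Some k ->
     `|(nth (0,0) b k).1 - (nth (0,0) a i).1 - s| < e /\
     `|(nth (0,0) b k).2 - (nth (0,0) a i).2 - s| < e) ->
  exists d, perm_eq (pd_shift a d) b.
Proof.
move=> pf total onto He near.
have sa : size (pd_shift a s) = size a by rewrite size_map.
have inD (i : 'I_(size (pd_shift a s))) (k : 'I_(size b)) :
    (nth (0,0) b k).1 - (nth (0,0) a i).1 \in coord_diffs a b /\
    (nth (0,0) b k).2 - (nth (0,0) a i).2 \in coord_diffs a b.
  have ia : nth (0,0) a i \in a by rewrite mem_nth // -sa.
  have kb : nth (0,0) b k \in b by rewrite mem_nth.
  by split; rewrite mem_cat; apply/orP; [left|right];
    exact: (allpairs_f (fun p q => _) ia kb).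
have [d Hd] : exists d, forall i k, f i = Some k ->
    (nth (0,0) b k).1 - (nth (0,0) a i).1 = d /\
    (nth (0,0) b k).2 - (nth (0,0) a i).2 = d.
  case: (pickP (@predT 'I_(size (pd_shift a s)))) => [i0 _ | no_point]; last first.
    by exists 0 => i; move: (no_point i).
  have [k0 E0] := total i0; have [near0 _] := near _ _ E0; have [inD0 _] := inD i0 k0.
  exists ((nth (0,0) b k0).1 - (nth (0,0) a i0).1) => i k E.
  have [near1 near2] := near _ _ E; have [inD1 inD2] := inD i k.
  by split; apply: He.
exists d; have -> : pd_shift a d = pd_shift (pd_shift a s) (d - s).
  by rewrite shift_shift addrC subrK.
apply: (matching_perm pf total onto) => i k E; rewrite nth_shift -?sa //.
have [h1 h2] := Hd _ _ E; move: (nth (0,0) b k) h1 h2 => [y1 y2] /= h1 h2.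
by congr (_, _); lra.
Qed.

Lemma dS_zero a b : (forall p, p \in a -> p.1 < p.2) ->
  (forall p, p \in b -> p.1 < p.2) -> dS_bar a b = 0 ->
  exists d, perm_eq (pd_shift a d) b.
Proof.
move=> Ha Hb H0.
have [m m0 Hm] : exists2 m, 0 < m & forall p, p \in a ++ b -> m <= (p.2 - p.1) / 2.
  have [|m m0 Hm] := @pos_lower_bound [seq (p.2 - p.1) / 2 | p <- a ++ b].
    move=> z /mapP[p]; rewrite mem_cat => /orP[/Ha|/Hb] lt_p ->;
      by rewrite divr_gt0 // subr_gt0.
  by exists m => // p pab; apply: Hm; exact: map_f.
have [e e0 He] := finite_separated (coord_diffs a b).
have [s Hs] : exists s, bottleneck (pd_shift a s) b < Num.min m e.
  by apply: dS_lt; rewrite H0 lt_min m0 e0.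
have [f [tA [tB [pf]]]] := bn_lt Hs; rewrite lt_min => /andP[Hcm Hce].
have pers p : p \in pd_shift a s ++ b -> m <= (p.2 - p.1) / 2.
  rewrite mem_cat => /orP[/mapP[q qa ->] | pb]; last by apply: Hm; rewrite mem_cat pb orbT.
  by rewrite /= shift_diff; apply: Hm; rewrite mem_cat qa.
have [total onto] := cheap_matching_bijective pers Hcm.
apply: (uniform_translation pf total onto (He s)) => i k Ei.
have ia : (i < size a)%N := leq_trans (ltn_ord i) (eq_leq (size_map _ a)).
have := le_lt_trans (cost_some tA tB Ei) Hce.
rewrite nth_shift // /linf gt_max /= => /andP[e1 e2].
by rewrite -!addrA -!opprD distrC [`|_ - (_ + s)|]distrC.
Qed.

Lemma pdiag_pos A : is_pdiag A -> forall p, p \in A -> 0 < p.1 /\ 0 < p.2.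
Proof. by move=> HA p /HA[p1 p12]; split => //; exact: lt_trans p12. Qed.

Lemma log_above_diag A : is_pdiag A -> forall p, p \in pd_log A -> p.1 < p.2.
Proof.
move=> HA p /mapP[q qA ->] /=; have [q1 q2] := pdiag_pos HA qA.
by rewrite ltr_ln ?posrE //; case: (HA q qA).
Qed.

Lemma log_scale A c : is_pdiag A -> 0 < c ->
  pd_log (pd_scale c A) = pd_shift (pd_log A) (ln c).
Proof.
move=> HA c0; rewrite /pd_log /pd_scale /pd_shift -!map_comp.
apply/eq_in_map => p pA /=; have [p1 p2] := pdiag_pos HA pA.
by rewrite !lnM ?posrE // ![ln c + _]addrC.
Qed.

Lemma equiv_log_shift A A' : is_pdiag A' -> pd_equiv A A' ->
  exists t, perm_eq (pd_log A) (pd_shift (pd_log A') t).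
Proof.
by move=> HA' [c [c0 AcA']]; exists (ln c); rewrite -log_scale //; exact: perm_map.
Qed.

Lemma scale_pdiag A c : 0 < c -> is_pdiag A -> is_pdiag (pd_scale c A).
Proof.
move=> c0 HA _ /mapP[p pA ->] /=; have [p1 p12] := HA p pA.
by rewrite mulr_gt0 // ltr_pM2l.
Qed.

Lemma perm_log A B : is_pdiag A -> is_pdiag B ->
  perm_eq (pd_log A) (pd_log B) -> perm_eq A B.
Proof.
have exp_log C : is_pdiag C -> map (fun p => (expR p.1, expR p.2)) (pd_log C) = C.
  move=> HC; rewrite /pd_log -map_comp -[RHS]map_id; apply/eq_in_map => -[x y] pC /=.
  by have [x0 y0] := pdiag_pos HC pC; rewrite !lnK ?posrE.
move=> HA HB /(perm_map (fun p => (expR p.1, expR p.2))).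
by rewrite !exp_log.
Qed.

Lemma D_SC A B : D_S A B = D_S B A.
Proof. exact: dSC. Qed.

Lemma D_S_equivl A A' B : is_pdiag A' -> pd_equiv A A' -> D_S A B = D_S A' B.
Proof. by move=> HA' /(equiv_log_shift HA') [t]; exact: dS_perm_shiftl. Qed.

Lemma D_S_zero A B : is_pdiag A -> is_pdiag B -> D_S A B = 0 -> pd_equiv A B.
Proof.
move=> HA HB; rewrite D_SC => /dS_zero [|//|d].
- exact: log_above_diag.
- exact: log_above_diag.
rewrite -{1}(expRK d) -log_scale ?expR_gt0 // => /perm_log perm_BA.
exists (expR d); split; first exact: expR_gt0.
by rewrite perm_sym perm_BA //; exact: scale_pdiag (expR_gt0 d) HB.
Qed.

End PersistenceDiagrams.

Theorem mainTheorem3 (R : realType) :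
  (* well defined: independent of representatives *)
  (forall A A' B B' : pts R,
      is_pdiag A -> is_pdiag A' -> is_pdiag B -> is_pdiag B' ->
      pd_equiv A A' -> pd_equiv B B' -> D_S A B = D_S A' B') /\
  (* metric on equivalence classes *)
  (forall A B : pts R, is_pdiag A -> is_pdiag B -> 0 <= D_S A B) /\
  (forall A B : pts R, is_pdiag A -> is_pdiag B -> D_S A B = D_S B A) /\
  (forall A B C : pts R, is_pdiag A -> is_pdiag B -> is_pdiag C ->
      D_S A C <= D_S A B + D_S B C) /\
  (forall A B : pts R, is_pdiag A -> is_pdiag B ->
      (D_S A B = 0 <-> pd_equiv A B)).
Proof.
split.
  move=> A A' B B' _ HA' _ HB' eqA eqB.
  by rewrite (D_S_equivl _ HA' eqA) D_SC (D_S_equivl _ HB' eqB) D_SC.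
split; first by move=> A B _ _; exact: dS_ge0.
split; first by move=> A B _ _; exact: D_SC.
split; first by move=> A B C _ _ _; exact: dS_tri.
move=> A B HA HB; split; first exact: D_S_zero.
by move=> eqAB; rewrite (D_S_equivl _ HB eqAB) /D_S dS_refl_perm.
Qed.
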